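(* Let $X$ be a separable Banach space with a $1$-norming FMD $(E_j)$. Let $(\mathcal A_m)_{m\in\mathbb N}$ be an increasing sequence of closed subsets of $\mathcal B_\omega$, each closed under taking tails, and let $\mathcal A=\bigcup_{m}\mathcal A_m$. If Player I has a winning strategy for the $\mathcal A$-game, then there is $m\in\mathbb N$ such that Player I has a winning strategy for the $\mathcal A_m$-game.
   Context: FMD: a sequence $(E_k)$ of finite dimensional subspaces of $X$ with biorthogonal $F_k=\{f\in X^*:f|_{E_j}=0\ \forall j\neq k\}$ such that $\mathrm{span}(E_k)$ is dense, $E_k\cap\overline{\mathrm{span}(E_j:j\neq k)}=\{0\}$ and $(F_k)$ is total; $1$-norming means $\sup\{f(x):f\in\mathrm{span}(F_j),\|f\|\le1\}\ge\|x\|$. $c_{00}(E_j)=\mathrm{span}(E_j:j\in\mathbb N)$; $\mathrm{supp}_E(x)$ is the set of $j$ with nonzero $E_j$-component of $x$, and $\mathrm{rg}_E(x)$ the smallest interval containing it. $\mathcal B_\omega$ is the set of infinite block sequences $(x_j)$ in $S_X\cap c_{00}(E_j)$ (i.e. $\max\mathrm{supp}_E(x_j)<\min\mathrm{supp}_E(x_{j+1})$), with the product of the norm topologies; closed refers to this topology. $\mathcal A\subset\mathcal B_\omega$ is closed under taking tails if $(x_{j+n})_{j\in\mathbb N}\in\mathcal A$ whenever $(x_j)\in\mathcal A$ and $n\in\mathbb N$. The $\mathcal A$-game: Player I chooses $k_1\in\mathbb N$, Player II chooses $x_1\in S_X\cap c_{00}(E_j)$ with $\min\mathrm{supp}_E(x_1)\ge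 k_1$; then Player I chooses $k_2>\max\mathrm{rg}_E(x_1)$, Player II chooses $x_2\in S_X\cap c_{00}(E_j)$ with $\min\mathrm{supp}_E(x_2)\ge k_2$, and so on indefinitely. Player I wins if the resulting sequence $(x_j)$ lies in $\mathcal A$. A winning strategy for Player I is a rule assigning to each finite sequence of previous moves of Player II her next legal choice $k_{n+1}$, such that every play following it results in a sequence in $\mathcal A$. *)

From HB Require Import structures.
From mathcomp Require Import all_boot all_order all_algebra.
From mathcomp Require Import all_classical all_reals all_analysis.
Set Implicit Arguments. Unset Strict Implicit. Unset Printing Implicit Defensive.
Import Order.TTheory GRing.Theory Num.Theory.
Import numFieldNormedType.Exports.
Local Open Scope classical_set_scope.
Local Open Scope ring_scope.

Section FMD.
Variables (R : realType) (X : normedModType R).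

Definition lin_span (A : set X) : set X :=
  [set x | exists n (c : 'I_n -> R) (v : 'I_n -> X),
     (forall i, A (v i)) /\ x = \sum_(i < n) c i *: v i].

Definition fin_dim_subspace (V : set X) : Prop :=
  exists n (v : 'I_n -> X), V = lin_span (range v).

Definition is_dual (f : X -> R) : Prop :=
  (forall (a : R) (x y : X), f (a *: x + y) = a * f x + f y) /\ continuous f.

Definition dual_norm_le1 (f : X -> R) : Prop := forall x, `|f x| <= `|x|.

Definition span_E (E : nat -> set X) (P : set nat) : set X :=
  lin_span (\bigcup_(j in P) E j).

Definition biorth (E : nat -> set X) (k : nat) : set (X -> R) :=
  [set f | is_dual f /\ forall j, j != k -> forall y, E j y -> f y = 0].

Definition dual_span (F : nat -> set (X -> R)) : set (X -> R) :=
  [set g | exists n (c : 'I_n -> R) (js : 'I_n -> nat) (fs : 'I_n -> X -> R),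
     (forall i, F (js i) (fs i)) /\ g = (fun x => \sum_(i < n) c i * fs i x)].

Definition is_FMD (E : nat -> set X) : Prop :=
  [/\ (forall k, fin_dim_subspace (E k)),
      closure (span_E E setT) = setT,
      (forall k, E k `&` closure (span_E E [set j | j != k]) = [set 0])
   & (forall x, (forall k f, biorth E k f -> f x = 0) -> x = 0)].

Definition one_norming (E : nat -> set X) : Prop :=
  forall x, ((`|x|)%:E <= ereal_sup
     [set (f x)%:E | f in dual_span (biorth E) `&` dual_norm_le1])%E.

Definition separable : Prop :=
  exists D : set X, countable D /\ closure D = setT.

Definition c00 (E : nat -> set X) : set X := span_E E setT.

Definition comp_E (E : nat -> set X) (x : X) (j : nat) (y : X) : Prop :=
  E j y /\ span_E E [set i | i != j] (x - y).

Definition supp_E (E : nat -> set X) (x : X) : set nat :=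
  [set j | exists2 y, comp_E E x j y & y != 0].

Definition unit_c00 (E : nat -> set X) (x : X) : Prop := `|x| = 1 /\ c00 E x.

Definition B_omega (E : nat -> set X) : set (nat -> X) :=
  [set xs | (forall n, unit_c00 E (xs n)) /\
     forall n a b, supp_E E (xs n) a -> supp_E E (xs n.+1) b -> (a < b)%N].

Definition closed_in_B (E : nat -> set X) (A : set (nat -> X)) : Prop :=
  exists C : set {ptws nat -> X}, closed C /\ A = B_omega E `&` C.

Definition tail_closed (A : set (nat -> X)) : Prop :=
  forall xs n, A xs -> A (fun j => xs (j + n)%N).

Definition hist (xs : nat -> X) (n : nat) : seq X := mkseq xs n.

Definition II_move (E : nat -> set X) (k : nat) (x : X) : Prop :=
  unit_c00 E x /\ forall j, supp_E E x j -> (k <= j)%N.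

Definition follows (E : nat -> set X) (sigma : seq X -> nat) (xs : nat -> X) :=
  forall n, II_move E (sigma (hist xs n)) (xs n).

(* sigma always chooses legally: k_{n+1} > max rg_E(x_n) *)
Definition legal_strategy (E : nat -> set X) (sigma : seq X -> nat) : Prop :=
  forall xs n, (forall m, (m <= n)%N -> II_move E (sigma (hist xs m)) (xs m)) ->
    forall j, supp_E E (xs n) j -> (j < sigma (hist xs n.+1))%N.

Definition winning_I (E : nat -> set X) (A : set (nat -> X))
  (sigma : seq X -> nat) : Prop :=
  legal_strategy E sigma /\ forall xs, follows E sigma xs -> A xs.

Definition has_winning_I (E : nat -> set X) (A : set (nat -> X)) : Prop :=
  exists sigma, winning_I E A sigma.

End FMD.

From HB Require Import structures.
From mathcomp Require Import all_boot all_order all_algebra.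
From mathcomp Require Import all_classical all_reals all_analysis.
From mathcomp Require Import zify.
Import numFieldNormedType.Exports.
Local Open Scope classical_set_scope.

(* If no A_m admitted a winning strategy, a play against the winning strategy
   sigma for A could be built in stages: at stage m, the continuation of sigma
   after the current finite history is not winning for A_m, so some play
   consistent with it leaves A_m; as A_m is closed and closed under tails, a
   finite prefix of that play already rules out A_m.  The limit of these
   prefixes follows sigma yet lies in no A_m, contradicting that sigma wins A. *)

Definition agree_upto {T : Type} (n : nat) (f g : nat -> T) : Prop :=
  forall i, (i < n)%N -> f i = g i.

Lemma agree_uptoW {T : Type} {m n : nat} {f g : nat -> T} :
  (m <= n)%N -> agree_upto n f g -> agree_upto m f g.
Proof. by move=> mn fg i im; apply: fg; apply: leq_trans mn. Qed.

Lemma diagonal_limit {T : Type} {u : nat -> nat -> T} {len : nat -> nat} :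
  (forall m, (len m < len m.+1)%N) ->
  (forall m, agree_upto (len m) (u m.+1) (u m)) ->
  exists2 z, forall m, agree_upto (len m) z (u m) & forall m, (m <= len m)%N.
Proof.
move=> lenS uS.
have len_ge m : (m <= len m)%N.
  by elim: m => // m IH; apply: leq_ltn_trans IH (lenS m).
pose r (p q : nat * (nat -> T)) := (p.1 <= q.1)%N /\ agree_upto p.1 q.2 p.2.
have r_trans y x z : r x y -> r y z -> r x z.
  move=> [xy xya] [yz yza]; split; first exact: leq_trans yz.
  by move=> i ix; rewrite yza ?xya //; apply: leq_trans xy.
have stage_le := homo_leq (f := fun m => (len m, u m))
  (fun _ => conj (leqnn _) (fun _ _ => erefl)) r_trans
  (fun m => conj (ltnW (lenS m)) (uS m)).
exists (fun i => u i.+1 i) => // m i im /=.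
have [km|mk] := leqP m i.+1.
  by have [_ /= ->] := stage_le _ _ km.
by have [_ /= ->] := stage_le _ _ (ltnW mk); last exact: len_ge.
Qed.

Lemma ptws_closed_agree {T : uniformType} {C : set {ptws nat -> T}}
    {xs : nat -> T} :
  closed C -> ~ C xs -> exists N, forall zs, agree_upto N zs xs -> ~ C zs.
Proof.
move=> cC Cxs; apply: contrapT => /forallNP noN.
have /choice[t tP] : forall N, exists zs, agree_upto N zs xs /\ C zs.
  move=> N; have /existsNP[zs] := noN N.
  by move=> /not_implyP[agr /contrapT Czs]; exists zs.
apply: Cxs; apply: (@closed_cvg _ _ \oo _ (t : nat -> {ptws nat -> T}) C cC).
  exact: nearW (fun N => (tP N).2).
apply/pointwise_cvgP => j; apply: cvg_near_cst.
by exists j.+1 => // N /= jN; apply: (tP N).1.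
Qed.

Section Plays.
Context {R : realType} {X : normedModType R} {E : nat -> set X}.

Definition play_cat (ys : nat -> X) (n : nat) (xs : nat -> X) : nat -> X :=
  fun i => if (i < n)%N then ys i else xs (i - n)%N.

Definition strategy_after (sigma : seq X -> nat) (s : seq X) : seq X -> nat :=
  fun h => sigma (s ++ h).

Lemma hist_agree {f g : nat -> X} {n : nat} :
  agree_upto n f g -> hist f n = hist g n.
Proof.
move=> fg; apply/eq_in_map => i; rewrite mem_iota add0n => /andP[_].
exact: fg.
Qed.

Lemma play_cat_agree ys n xs : agree_upto n (play_cat ys n xs) ys.
Proof. by rewrite /play_cat => i ->. Qed.

Lemma play_cat_shift ys n xs k : play_cat ys n xs (n + k) = xs k.
Proof. by rewrite /play_cat ltnNge leq_addr /= addKn. Qed.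

Lemma hist_play_cat_prefix ys n xs j :
  (j <= n)%N -> hist (play_cat ys n xs) j = hist ys j.
Proof. by move=> jn; apply/hist_agree/(agree_uptoW jn)/play_cat_agree. Qed.

Lemma hist_play_cat ys n xs k :
  hist (play_cat ys n xs) (n + k) = hist ys n ++ hist xs k.
Proof.
rewrite /hist /mkseq iotaD map_cat add0n; congr (_ ++ _).
  by apply: hist_agree; apply: play_cat_agree.
rewrite -[in iota n k](addn0 n) iotaDl -map_comp; apply: eq_map => i /=.
exact: play_cat_shift.
Qed.

Lemma follows_prefixes {sigma : seq X -> nat} {zs : nat -> X} :
  (forall n, exists2 ys, follows E sigma ys & agree_upto n.+1 zs ys) ->
  follows E sigma zs.
Proof.
move=> pref n; have [ys fys zys] := pref n.
rewrite zys // (hist_agree (agree_uptoW (leqnSn n) zys)); exact: fys.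
Qed.

Lemma II_move_play_cat {sigma : seq X -> nat} {ys xs : nat -> X} {n : nat} j :
  follows E sigma ys ->
  ((n <= j)%N -> II_move E (strategy_after sigma (hist ys n) (hist xs (j - n)))
                   (xs (j - n))) ->
  II_move E (sigma (hist (play_cat ys n xs) j)) (play_cat ys n xs j).
Proof.
move=> fys fxs; have [jn|nj] := ltnP j n; last first.
  move: fxs; have [k ->] : exists k, j = n + k by exists (j - n); rewrite subnKC.
  by rewrite play_cat_shift hist_play_cat addKn => /(_ (leq_addr _ _)).
rewrite play_cat_agree // hist_play_cat_prefix ?(ltnW jn) //; exact: fys.
Qed.

Lemma follows_play_cat {sigma : seq X -> nat} {ys : nat -> X} {n : nat}
    {xs : nat -> X} :
  follows E sigma ys -> follows E (strategy_after sigma (hist ys n)) xs ->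
  follows E sigma (play_cat ys n xs).
Proof. by move=> fys fxs j; apply: II_move_play_cat => // _; apply: fxs. Qed.

Lemma legal_strategy_after {sigma : seq X -> nat} {ys : nat -> X} (n : nat) :
  legal_strategy E sigma -> follows E sigma ys ->
  legal_strategy E (strategy_after sigma (hist ys n)).
Proof.
move=> leg fys xs k fxs a xka.
have := leg (play_cat ys n xs) (n + k) _ a.
rewrite play_cat_shift -addnS hist_play_cat; apply=> // j jnk.
by apply: II_move_play_cat => // _; apply: fxs; lia.
Qed.

Lemma follows_B_omega {tau : seq X -> nat} {xs : nat -> X} :
  legal_strategy E tau -> follows E tau xs -> B_omega E xs.
Proof.
move=> leg fxs; split=> [k|k a b xka xkb]; first by case: (fxs k).
apply: leq_trans (leg xs k (fun m _ => fxs m) a xka) _.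
by case: (fxs k.+1) => _; apply.
Qed.

Lemma not_winning_counterplay {A : set (nat -> X)} {tau : seq X -> nat} :
  legal_strategy E tau -> ~ has_winning_I E A ->
  exists2 xs, follows E tau xs & ~ A xs.
Proof.
move=> leg noW; apply: contrapT => /forall2NP noxs; apply: noW.
by exists tau; split => // xs fxs; case: (noxs xs) => // /contrapT.
Qed.

Section Avoiding.
Context {sigma : seq X -> nat} {A : nat -> set (nat -> X)}.
Hypothesis leg : legal_strategy E sigma.
Hypothesis A_closed : forall m, closed_in_B E (A m).
Hypothesis A_tail : forall m, tail_closed (A m).
Hypothesis A_noW : forall m, ~ has_winning_I E (A m).

Definition extends_avoiding (B : set (nat -> X)) (p q : (nat -> X) * nat) :=
  [/\ follows E sigma q.1, (p.2 < q.2)%N, agree_upto p.2 q.1 p.1 &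
    forall zs, agree_upto q.2 zs q.1 -> ~ B zs].

Lemma follows_extend_avoiding m ys n :
  follows E sigma ys -> exists q, extends_avoiding (A m) (ys, n) q.
Proof.
move=> fys; have [C [cC AC]] := A_closed m.
have leg' := legal_strategy_after n leg fys.
have [xs fxs Axs] := not_winning_counterplay leg' (A_noW m).
have [|N noC] := ptws_closed_agree cC (xs := xs).
  by move=> Cxs; apply: Axs; rewrite AC; split => //; apply: follows_B_omega fxs.
exists (play_cat ys n xs, (n + N).+1); split => /=.
- exact: follows_play_cat.
- lia.
- exact: play_cat_agree.
(* The tail of such a zs would be a member of A m agreeing with xs for N moves. *)
move=> zs agr /(A_tail m _ n); rewrite AC => -[_]; apply: noC => i iN.
by rewrite addnC agr ?play_cat_shift //; lia.
Qed.

Lemma avoiding_play {ys0 : nat -> X} : follows E sigma ys0 ->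
  exists2 zs, follows E sigma zs & forall m, ~ A m zs.
Proof.
move=> fys0.
have /choice[g gP] : forall m, exists gm : (nat -> X) * nat -> (nat -> X) * nat,
    forall p, follows E sigma p.1 -> extends_avoiding (A m) p (gm p).
  move=> m; suff /choice[gm gmP] : forall p : (nat -> X) * nat,
      exists q, follows E sigma p.1 -> extends_avoiding (A m) p q by exists gm.
  move=> [ys n] /=; have [fys|] := pselect (follows E sigma ys); last first.
    by exists (ys, n).
  by have [q ?] := follows_extend_avoiding m ys n fys; exists q.
pose st m := iteri m g (ys0, 0%N).
have st_ext m : extends_avoiding (A m) (st m) (st m.+1).
  elim: m => [|m IH]; first exact: gP.
  by rewrite [st m.+2]iteriS; apply: gP; case: IH.
have [zs zs_agree len_ge] := diagonal_limit (u := fun m => (st m).1)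
  (len := fun m => (st m).2) (fun m => let: And4 _ lt _ _ := st_ext m in lt)
  (fun m => let: And4 _ _ agr _ := st_ext m in agr).
exists zs => [|m].
  apply: follows_prefixes => n; exists (st n.+1).1; first by case: (st_ext n).
  exact: agree_uptoW (len_ge _) (zs_agree _).
by have [_ _ _] := st_ext m; apply; apply: zs_agree.
Qed.

End Avoiding.
End Plays.

Theorem proposition6p6 (R : realType) (X : completeNormedModType R)
  (E : nat -> set X) (A : nat -> set (nat -> X)) :
  separable X -> is_FMD E -> one_norming E ->
  (forall m, A m `<=` B_omega E) ->
  (forall m, closed_in_B E (A m)) ->
  (forall m, tail_closed (A m)) ->
  (forall m, A m `<=` A m.+1) ->
  has_winning_I E (\bigcup_m A m) ->
  exists m, has_winning_I E (A m).
Proof.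
move=> _ _ _ _ A_closed A_tail _ [sigma [leg win]].
apply: contrapT => /forallNP A_noW.
have [ys0 fys0 _] := not_winning_counterplay leg (A_noW 0%N).
have [zs fzs avoid] := avoiding_play leg A_closed A_tail A_noW fys0.
by have [m _] := win zs fzs; apply: avoid.
Qed.
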